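(* For every integer $t\ge0$, \begin{align*} \kappa_2(2t+1)&=\tfrac{\kappa_2(t)+\kappa_2(t+1)}2+1;\\ \kappa_3(2t+1)&=\tfrac{\kappa_3(t)+\kappa_3(t+1)}2+\tfrac32\bigl(\kappa_2(t)-\kappa_2(t+1)\bigr);\\ \kappa_4(2t+1)&=\tfrac{\kappa_4(t)+\kappa_4(t+1)}2+2\bigl(\kappa_3(t)-\kappa_3(t+1)\bigr)+\tfrac34\bigl(\kappa_2(t)-\kappa_2(t+1)\bigr)^2-2;\\ \kappa_5(2t+1)&=\tfrac{\kappa_5(t)+\kappa_5(t+1)}2+\tfrac52\bigl(\kappa_4(t)-\kappa_4(t+1)\bigr)+\tfrac52\bigl(\kappa_2(t)-\kappa_2(t+1)\bigr)\bigl(\kappa_3(t)-\kappa_3(t+1)\bigr)-10\bigl(\kappa_2(t)-\kappa_2(t+1)\bigr). \end{align*} In particular, $\kappa_2(1)=2$, $\kappa_3(1)=-6$, $\kappa_4(1)=26$, $\kappa_5(1)=-150$.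
   Context: $s(n)$ is the number of $1$s in the binary expansion of $n\ge0$. For integers $j$ and $t\ge0$, $\delta(j,t)=\lim_{N\to\infty}\frac1N|\{0\le n<N: s(n+t)-s(n)=j\}|$; for each $t$ these form a probability distribution on $\mathbb Z$ with finite support bounded above and exponentially decaying tail. Let $\gamma_t(\vartheta)=\sum_{j\in\mathbb Z}\delta(j,t)e^{2\pi i j\vartheta}$. The cumulants $\kappa_j(t)$ ($j\ge0$) are the real numbers defined by $\log\gamma_t(\vartheta)=\sum_{j\ge0}\frac{\kappa_j(t)}{j!}(2\pi i\vartheta)^j$ for complex $\vartheta$ in a neighbourhood of $0$ (i.e. the cumulants of the distribution $\delta(\cdot,t)$); in particular $\kappa_j(0)=0$ for all $j$. *)

From Stdlib Require Import Reals ZArith List.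
From Coquelicot Require Import Coquelicot.
Open Scope R_scope.

Fixpoint pos_popcount (p : positive) : nat :=
  match p with
  | xH => 1%nat
  | xO q => pos_popcount q
  | xI q => S (pos_popcount q)
  end.

Definition s (n : nat) : nat :=
  match N.of_nat n with
  | N0 => 0%nat
  | Npos p => pos_popcount p
  end.

Definition count_diff (j : Z) (t N : nat) : nat :=
  length (filter (fun n => Z.eqb (Z.of_nat (s (n + t)) - Z.of_nat (s n))%Z j)
                 (seq 0 N)).

Definition delta (j : Z) (t : nat) : R :=
  real (Lim_seq (fun N => INR (count_diff j t N) / INR N)).

Definition zsum (f : Z -> R) : R :=
  Series (fun n => f (Z.of_nat n)) + Series (fun n => f (- Z.of_nat (S n))%Z).

(* Moment generating function x |-> sum_j delta(j,t) e^{j x}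
   = gamma_t(x / (2 pi i)). *)
Definition mgf (t : nat) (x : R) : R :=
  zsum (fun j => delta j t * exp (IZR j * x)).

(* Cumulants: log gamma_t(theta) = sum_k kappa_k(t)/k! (2 pi i theta)^k,
   i.e. kappa_k(t) is the k-th derivative at 0 of x |-> log mgf t x. *)
Definition kappa (k t : nat) : R :=
  Derive_n (fun x => ln (mgf t x)) k 0.

From Stdlib Require Import Reals ZArith List Lia Lra.
From Coquelicot Require Import Coquelicot.
Open Scope R_scope.

(* Since s(2n) = s(n) and s(2n+1) = s(n) + 1, splitting n by parity gives
   delta(j,2t) = delta(j,t) and delta(j,2t+1) = (delta(j-1,t) + delta(j+1,t+1))/2,
   the densities existing by the same recursion (t = 1 is computed by hand).
   As delta(.,t) decays like 2^-|j|, the moment generating function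
   M_t(x) = sum_j delta(j,t) e^(jx) converges for |x| < 1/2, where
   2 M_(2t+1)(x) = e^x M_t(x) + e^-x M_(t+1)(x); by induction every M_t is smooth
   and positive there with M_t(0) = 1.  Writing M_t = exp K_t and differentiating
   this identity k times at 0 equates the complete Bell polynomial of the cumulants
   of 2t+1 with those of t and t+1, whose first cumulants are shifted by +1 and -1.
   For k = 1 this gives kappa_1 = 0 everywhere, and k = 2, ..., 5 can then be
   solved successively for kappa_k(2t+1); t = 0 gives the values at 1. *)

(** * Smooth functions on open sets *)

Lemma Derive_n_S (f : R -> R) n x : Derive_n f (S n) x = Derive_n (Derive f) n x.
Proof. now rewrite <- Nat.add_1_r, <- Derive_n_comp. Qed.

Section SmoothOn.

Variable D : R -> Prop.
Hypothesis D_open : open D.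

Lemma Derive_n_ext_on (u v : R -> R) :
  (forall y, D y -> u y = v y) -> forall k y, D y -> Derive_n u k y = Derive_n v k y.
Proof.
  intros Huv k y Hy; apply Derive_n_ext_loc.
  apply (filter_imp D); [exact Huv | exact (D_open y Hy)].
Qed.

Lemma ex_derive_ext_on (u v : R -> R) x :
  (forall y, D y -> u y = v y) -> D x -> ex_derive u x -> ex_derive v x.
Proof.
  intros Huv Hx; apply ex_derive_ext_loc.
  apply (filter_imp D); [exact Huv | exact (D_open x Hx)].
Qed.

(* Note the shift: [derivable_upto n f] makes [f] [n + 1] times differentiable. *)
Definition derivable_upto (n : nat) (f : R -> R) :=
  forall k x, (k <= n)%nat -> D x -> ex_derive (Derive_n f k) x.

Definition smooth_on (f : R -> R) := forall n, derivable_upto n f.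

Lemma derivable_upto_le n m f : (m <= n)%nat -> derivable_upto n f -> derivable_upto m f.
Proof. intros Hmn Hf k x Hk; apply Hf; lia. Qed.

Lemma derivable_upto_S n f : derivable_upto (S n) f -> derivable_upto n f.
Proof. apply derivable_upto_le; lia. Qed.

Lemma derivable_upto_Derive n f : derivable_upto (S n) f -> derivable_upto n (Derive f).
Proof.
  intros Hf k x Hk Hx; apply (ex_derive_ext (Derive_n f (S k))).
  - intros; apply Derive_n_S.
  - apply Hf; [lia | exact Hx].
Qed.

Lemma derivable_upto_ext n u v :
  (forall y, D y -> u y = v y) -> derivable_upto n u -> derivable_upto n v.
Proof.
  intros Huv Hu k x Hk Hx; apply (ex_derive_ext_on (Derive_n u k)); auto.
  intros; now apply Derive_n_ext_on.
Qed.

Lemma Derive_n_plus_on n f g : derivable_upto n f -> derivable_upto n g ->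
  forall k y, (k <= S n)%nat -> D y ->
  Derive_n (fun z => f z + g z) k y = Derive_n f k y + Derive_n g k y.
Proof.
  intros Hf Hg k y Hk Hy; apply Derive_n_plus;
    (apply (filter_imp D); [|exact (D_open y Hy)]);
    intros z Hz [|j] Hj; simpl; auto; [apply Hf | apply Hg]; auto; lia.
Qed.

Lemma derivable_upto_plus n f g : derivable_upto n f -> derivable_upto n g ->
  derivable_upto n (fun z => f z + g z).
Proof.
  intros Hf Hg k x Hk Hx.
  apply (ex_derive_ext_on (fun y => Derive_n f k y + Derive_n g k y)); auto.
  - intros y Hy; symmetry; apply (Derive_n_plus_on n); auto.
  - apply (ex_derive_plus (Derive_n f k) (Derive_n g k)); [apply Hf | apply Hg]; auto.
Qed.

Lemma Derive_n_mult_S f g : derivable_upto 0 f -> derivable_upto 0 g ->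
  forall k y, D y -> Derive_n (fun z => f z * g z) (S k) y =
                     Derive_n (fun z => Derive f z * g z + f z * Derive g z) k y.
Proof.
  intros Hf Hg k y Hy; rewrite Derive_n_S.
  apply Derive_n_ext_on; auto; intros z Hz.
  apply Derive_mult; [apply (Hf 0%nat) | apply (Hg 0%nat)]; auto.
Qed.

Lemma derivable_upto_mult n f g : derivable_upto n f -> derivable_upto n g ->
  derivable_upto n (fun z => f z * g z).
Proof.
  revert f g; induction n as [|n IH]; intros f g Hf Hg [|k] x Hk Hx.
  1,3: apply (ex_derive_mult f g); [apply (Hf 0%nat) | apply (Hg 0%nat)]; auto.
  - lia.
  - pose proof (derivable_upto_le (S n) 0 f ltac:(lia) Hf).
    pose proof (derivable_upto_le (S n) 0 g ltac:(lia) Hg).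
    apply (ex_derive_ext_on (Derive_n (fun z => Derive f z * g z + f z * Derive g z) k)); auto.
    + intros y Hy; symmetry; now apply Derive_n_mult_S.
    + apply (derivable_upto_plus n); [apply IH | apply IH | lia | exact Hx].
      * now apply derivable_upto_Derive.
      * now apply derivable_upto_S.
      * now apply derivable_upto_S.
      * now apply derivable_upto_Derive.
Qed.

Lemma smooth_on_Derive f : smooth_on f -> smooth_on (Derive f).
Proof. intros Hf n; apply derivable_upto_Derive, Hf. Qed.

Lemma smooth_on_ext u v : (forall y, D y -> u y = v y) -> smooth_on u -> smooth_on v.
Proof. intros Huv Hu n; exact (derivable_upto_ext n u v Huv (Hu n)). Qed.

Lemma smooth_on_plus f g : smooth_on f -> smooth_on g -> smooth_on (fun z => f z + g z).
Proof. intros Hf Hg n; apply derivable_upto_plus; auto. Qed.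

Lemma smooth_on_mult f g : smooth_on f -> smooth_on g -> smooth_on (fun z => f z * g z).
Proof. intros Hf Hg n; apply derivable_upto_mult; auto. Qed.

Lemma Derive_n_plus_smooth_on f g : smooth_on f -> smooth_on g ->
  forall k y, D y -> Derive_n (fun z => f z + g z) k y = Derive_n f k y + Derive_n g k y.
Proof. intros Hf Hg k y Hy; apply (Derive_n_plus_on k); auto. Qed.

(* [leibniz n u v] is the Leibniz sum [sum_k C(n,k) u_k v_(n-k)], unfolded along
   Pascal's rule so that no binomial coefficient appears. *)
Fixpoint leibniz (n : nat) (u v : nat -> R) : R :=
  match n with
  | O => u O * v O
  | S n => leibniz n (fun k => u (S k)) v + leibniz n u (fun k => v (S k))
  end.

Lemma leibniz_ext n u u' v v' :
  (forall k, u k = u' k) -> (forall k, v k = v' k) -> leibniz n u v = leibniz n u' v'.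
Proof.
  revert u u' v v'; induction n as [|n IH]; intros u u' v v' Hu Hv; simpl.
  - now rewrite Hu, Hv.
  - f_equal; apply IH; auto.
Qed.

Lemma Derive_n_mult_on n f g x : smooth_on f -> smooth_on g -> D x ->
  Derive_n (fun z => f z * g z) n x =
  leibniz n (fun k => Derive_n f k x) (fun k => Derive_n g k x).
Proof.
  revert f g x; induction n as [|n IH]; intros f g x Hf Hg Hx; [reflexivity|].
  pose proof (smooth_on_Derive f Hf) as Hf'; pose proof (smooth_on_Derive g Hg) as Hg'.
  rewrite Derive_n_mult_S by (apply Hf || apply Hg || exact Hx).
  rewrite (Derive_n_plus_smooth_on (fun z => Derive f z * g z) (fun z => f z * Derive g z))
    by (exact Hx || apply smooth_on_mult; assumption).
  rewrite !IH by assumption.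
  simpl; f_equal; apply leibniz_ext; intros; auto; symmetry; apply Derive_n_S.
Qed.

Lemma Derive_n_tower (F : nat -> R -> R) f :
  (forall y, D y -> f y = F O y) ->
  (forall n y, D y -> is_derive (F n) y (F (S n) y)) ->
  forall n y, D y -> Derive_n f n y = F n y.
Proof.
  intros H0 HS n; induction n as [|n IH]; intros y Hy; simpl; auto.
  rewrite (Derive_ext_loc _ (F n)).
  - now apply is_derive_unique, HS.
  - apply (filter_imp D); [exact IH | exact (D_open y Hy)].
Qed.

Lemma smooth_on_tower (F : nat -> R -> R) f :
  (forall y, D y -> f y = F O y) ->
  (forall n y, D y -> is_derive (F n) y (F (S n) y)) -> smooth_on f.
Proof.
  intros H0 HS n k x Hk Hx.
  apply (ex_derive_ext_on (F k)); auto.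
  - intros; symmetry; now apply (Derive_n_tower F).
  - eexists; now apply HS.
Qed.

End SmoothOn.

Lemma derivable_upto_comp (E D : R -> Prop) : open E -> open D -> forall n h f,
  (forall x, D x -> E (f x)) -> derivable_upto E n h -> derivable_upto D n f ->
  derivable_upto D n (fun x => h (f x)).
Proof.
  intros HE HD n; induction n as [|n IH]; intros h f Hmap Hh Hf [|k] x Hk Hx.
  1,3: apply (ex_derive_comp h f); [apply (Hh 0%nat) | apply (Hf 0%nat)]; auto.
  - lia.
  - apply (ex_derive_ext (Derive_n (Derive (fun x => h (f x))) k)).
    { intros; symmetry; apply Derive_n_S. }
    apply (ex_derive_ext_on D HD (Derive_n (fun y => Derive h (f y) * Derive f y) k)); auto.
    + intros y Hy; apply (Derive_n_ext_on D HD); auto; intros z Hz.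
      rewrite (Derive_comp h f z); [ring | apply (Hh 0%nat) | apply (Hf 0%nat)]; auto; lia.
    + apply (derivable_upto_mult D HD n); [apply IH | | lia | exact Hx]; auto.
      * now apply derivable_upto_Derive.
      * now apply (derivable_upto_S D).
      * now apply derivable_upto_Derive.
Qed.

Lemma smooth_on_comp (E D : R -> Prop) h f : open E -> open D ->
  (forall x, D x -> E (f x)) -> smooth_on E h -> smooth_on D f ->
  smooth_on D (fun x => h (f x)).
Proof. intros HE HD Hmap Hh Hf n; apply (derivable_upto_comp E D); auto. Qed.

Definition affine_tower (a b : R) (n : nat) (y : R) : R :=
  match n with O => a * y + b | 1%nat => a | _ => 0 end.

Lemma is_derive_affine_tower a b n y :
  is_derive (affine_tower a b n) y (affine_tower a b (S n) y).
Proof. destruct n as [|[|n]]; unfold affine_tower; auto_derive; auto; ring. Qed.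

Lemma smooth_on_affine D a b : open D -> smooth_on D (fun y => a * y + b).
Proof.
  intros HD; apply (smooth_on_tower D HD (affine_tower a b)); auto.
  intros; apply is_derive_affine_tower.
Qed.

Lemma smooth_on_const D c : open D -> smooth_on D (fun _ => c).
Proof.
  intros HD; apply (smooth_on_ext D HD (fun y => 0 * y + c)); [intros; ring|].
  now apply smooth_on_affine.
Qed.

Lemma smooth_on_scal_id D a : open D -> smooth_on D (fun y => a * y).
Proof.
  intros HD; apply (smooth_on_ext D HD (fun y => a * y + 0)); [intros; ring|].
  now apply smooth_on_affine.
Qed.

Lemma Derive_n_scal_id_0 a n : Derive_n (fun y => a * y) n 0 = if (n =? 1)%nat then a else 0.
Proof.
  rewrite (Derive_n_tower (fun _ => True) open_true (affine_tower a 0)); auto.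
  - destruct n as [|[|n]]; simpl; try ring; reflexivity.
  - intros; simpl; ring.
  - intros; apply is_derive_affine_tower.
Qed.

Lemma smooth_on_exp : smooth_on (fun _ => True) exp.
Proof.
  apply (smooth_on_tower _ open_true (fun _ => exp)); auto.
  intros; auto_derive; auto; ring.
Qed.

Lemma smooth_on_exp_comp D F : open D -> smooth_on D F -> smooth_on D (fun y => exp (F y)).
Proof.
  intros HD HF; apply (smooth_on_comp (fun _ => True) D); auto using open_true, smooth_on_exp.
Qed.

Lemma smooth_on_exp_scal D a : open D -> smooth_on D (fun y => exp (a * y)).
Proof. intros HD; apply smooth_on_exp_comp, smooth_on_scal_id; exact HD. Qed.

Definition inv_tower (n : nat) (y : R) : R := (-1) ^ n * INR (fact n) / y ^ S n.

Lemma is_derive_inv_tower n y : 0 < y -> is_derive (inv_tower n) y (inv_tower (S n) y).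
Proof.
  intros Hy; unfold inv_tower.
  assert (Hp : forall m, 0 < y ^ m) by (intro; apply pow_lt; lra).
  auto_derive.
  - specialize (Hp (S n)); simpl in Hp; lra.
  - change (match n with 0%nat => 1 | S _ => INR n + 1 end) with (INR (S n)).
    rewrite fact_simpl, mult_INR, S_INR; simpl pow; field.
    specialize (Hp n); lra.
Qed.

Lemma smooth_on_inv : smooth_on (fun y => 0 < y) Rinv.
Proof.
  apply (smooth_on_tower _ (open_gt 0) inv_tower).
  - intros y Hy; unfold inv_tower; simpl; field; lra.
  - intros n y Hy; now apply is_derive_inv_tower.
Qed.

Lemma smooth_on_ln : smooth_on (fun y => 0 < y) ln.
Proof.
  apply (smooth_on_tower _ (open_gt 0) (fun n => match n with O => ln | S n => inv_tower n end));
    [reflexivity|].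
  intros [|n] y Hy.
  - auto_derive; auto; unfold inv_tower; simpl; field; lra.
  - now apply is_derive_inv_tower.
Qed.

(* (exp o F)' = F' * (exp o F), then the Leibniz rule. *)
Lemma Derive_n_exp_comp D F n x : open D -> smooth_on D F -> D x ->
  Derive_n (fun y => exp (F y)) (S n) x =
  leibniz n (fun k => Derive_n F (S k) x) (fun k => Derive_n (fun y => exp (F y)) k x).
Proof.
  intros HD HF Hx; rewrite Derive_n_S.
  rewrite (Derive_n_ext_on D HD _ (fun y => Derive F y * exp (F y))); auto.
  - rewrite (Derive_n_mult_on D HD); auto using smooth_on_Derive, smooth_on_exp_comp.
    apply leibniz_ext; intros; auto; symmetry; apply Derive_n_S.
  - intros y Hy; apply is_derive_unique; auto_derive.
    + apply (HF 0%nat 0%nat); auto.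
    + now rewrite Rmult_1_l.
Qed.

(* The complete Bell polynomials B_0, ..., B_5 (junk value 1 beyond 5). *)
Definition bell (n : nat) (a : nat -> R) : R :=
  match n with
  | 1%nat => a 1%nat
  | 2%nat => a 2%nat + a 1%nat ^ 2
  | 3%nat => a 3%nat + 3 * a 1%nat * a 2%nat + a 1%nat ^ 3
  | 4%nat => a 4%nat + 4 * a 1%nat * a 3%nat + 3 * a 2%nat ^ 2 + 6 * a 1%nat ^ 2 * a 2%nat
         + a 1%nat ^ 4
  | 5%nat => a 5%nat + 5 * a 1%nat * a 4%nat + 10 * a 2%nat * a 3%nat
         + 10 * a 1%nat ^ 2 * a 3%nat + 15 * a 1%nat * a 2%nat ^ 2
         + 10 * a 1%nat ^ 3 * a 2%nat + a 1%nat ^ 5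
  | _ => 1
  end.

Lemma Derive_n_exp_comp_bell D F x k : open D -> smooth_on D F -> D x -> F x = 0 ->
  (k <= 5)%nat -> Derive_n (fun y => exp (F y)) k x = bell k (fun i => Derive_n F i x).
Proof.
  intros HD HF Hx HF0 Hk.
  set (e := fun k => Derive_n (fun y => exp (F y)) k x).
  assert (Hrec : forall n, e (S n) = leibniz n (fun k => Derive_n F (S k) x) e)
    by (intro n; exact (Derive_n_exp_comp D F n x HD HF Hx)).
  assert (E0 : e 0%nat = 1) by (unfold e; simpl; now rewrite HF0, exp_0).
  assert (E1 : e 1%nat = bell 1 (fun i => Derive_n F i x))
    by (rewrite Hrec; simpl; rewrite E0; ring).
  assert (E2 : e 2%nat = bell 2 (fun i => Derive_n F i x))
    by (rewrite Hrec; simpl; rewrite E0, E1; simpl; ring).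
  assert (E3 : e 3%nat = bell 3 (fun i => Derive_n F i x))
    by (rewrite Hrec; simpl; rewrite E0, E1, E2; simpl; ring).
  assert (E4 : e 4%nat = bell 4 (fun i => Derive_n F i x))
    by (rewrite Hrec; simpl; rewrite E0, E1, E2, E3; simpl; ring).
  assert (E5 : e 5%nat = bell 5 (fun i => Derive_n F i x))
    by (rewrite Hrec; simpl; rewrite E0, E1, E2, E3, E4; simpl; ring).
  change (e k = bell k (fun i => Derive_n F i x)).
  destruct k as [|[|[|[|[|[|k]]]]]]; auto; lia.
Qed.

(** * Binary digit sums *)

Lemma s_double n : s (2 * n) = s n.
Proof. unfold s; rewrite Nnat.Nat2N.inj_double; now destruct (N.of_nat n). Qed.

Lemma s_double_succ n : s (2 * n + 1) = S (s n).
Proof.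
  unfold s; rewrite Nat.add_1_r, Nnat.Nat2N.inj_succ, Nnat.Nat2N.inj_double.
  now destruct (N.of_nat n).
Qed.

Lemma nat_double_cases n : exists m, n = (2 * m)%nat \/ n = (2 * m + 1)%nat.
Proof. destruct (Nat.Even_or_Odd n) as [[m Hm]|[m Hm]]; exists m; lia. Qed.

Lemma binary_ind (P : nat -> Prop) :
  P 0%nat -> P 1%nat -> (forall t, P t -> P (2 * t)%nat) ->
  (forall t, P t -> P (t + 1)%nat -> P (2 * t + 1)%nat) -> forall t, P t.
Proof.
  intros H0 H1 Heven Hodd t; induction t as [t IH] using (well_founded_induction lt_wf).
  destruct t as [|[|t']]; auto.
  destruct (nat_double_cases (S (S t'))) as [m [Hm|Hm]]; rewrite Hm.
  - apply Heven, IH; lia.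
  - apply Hodd; apply IH; lia.
Qed.

Lemma s_succ_le n : (s (n + 1) <= S (s n))%nat.
Proof.
  induction n as [n IH] using (well_founded_induction lt_wf).
  destruct (nat_double_cases n) as [m [-> | ->]].
  - rewrite s_double_succ, s_double; lia.
  - replace (2 * m + 1 + 1)%nat with (2 * (m + 1))%nat by lia.
    rewrite s_double, s_double_succ.
    destruct m as [|m]; [cbv; lia|].
    specialize (IH (S m) ltac:(lia)); lia.
Qed.

Definition count_below (p : nat -> bool) (N : nat) : nat := length (filter p (seq 0 N)).

Lemma count_below_S p N : count_below p (S N) = (count_below p N + if p N then 1 else 0)%nat.
Proof.
  unfold count_below; rewrite seq_S, filter_app, length_app; simpl.
  now destruct (p N).
Qed.

Lemma count_below_double p q r :
  (forall m, p (2 * m)%nat = q m) -> (forall m, p (2 * m + 1)%nat = r m) ->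
  forall M, count_below p (2 * M) = (count_below q M + count_below r M)%nat /\
            count_below p (2 * M + 1) = (count_below q (S M) + count_below r M)%nat.
Proof.
  intros Hq Hr M; induction M as [|M [IH1 IH2]].
  - split; [reflexivity|].
    specialize (Hq 0%nat); unfold count_below; simpl in *; rewrite Hq.
    now destruct (q 0%nat).
  - assert (E : (2 * S M)%nat = S (2 * M + 1)) by lia.
    assert (Heven : count_below p (2 * S M) = (count_below q (S M) + count_below r (S M))%nat)
      by (rewrite E, count_below_S, IH2, Hr, (count_below_S r); lia).
    split; [exact Heven|].
    rewrite Nat.add_1_r, count_below_S, Heven, Hq, (count_below_S q (S M)); lia.
Qed.

(* [0, N) has [div2 (S N)] even and [div2 N] odd elements. *)
Lemma count_below_parity p q r :
  (forall m, p (2 * m)%nat = q m) -> (forall m, p (2 * m + 1)%nat = r m) ->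
  forall N, count_below p N = (count_below q (Nat.div2 (S N)) + count_below r (Nat.div2 N))%nat.
Proof.
  intros Hq Hr N; destruct (nat_double_cases N) as [m [-> | ->]].
  - rewrite Nat.div2_succ_double, Nat.div2_double; now apply count_below_double.
  - replace (S (2 * m + 1)) with (2 * S m)%nat by lia.
    replace (2 * m + 1)%nat with (S (2 * m)) at 2 by lia.
    rewrite Nat.div2_succ_double, Nat.div2_double; now apply count_below_double.
Qed.

Lemma count_below_const b N : count_below (fun _ => b) N = if b then N else 0%nat.
Proof. induction N; [now destruct b|]. rewrite count_below_S, IHN; destruct b; lia. Qed.

Lemma count_diff_odd j t N : count_diff j (2 * t + 1) N =
  (count_diff (j - 1) t (Nat.div2 (S N)) + count_diff (j + 1) (t + 1) (Nat.div2 N))%nat.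
Proof.
  apply count_below_parity; intro m.
  - replace (2 * m + (2 * t + 1))%nat with (2 * (m + t) + 1)%nat by lia.
    rewrite s_double_succ, s_double.
    apply Bool.eq_iff_eq_true; rewrite !Z.eqb_eq; lia.
  - replace (2 * m + 1 + (2 * t + 1))%nat with (2 * (m + (t + 1)))%nat by lia.
    rewrite s_double_succ, s_double.
    apply Bool.eq_iff_eq_true; rewrite !Z.eqb_eq; lia.
Qed.

Lemma count_diff_even j t N : count_diff j (2 * t) N =
  (count_diff j t (Nat.div2 (S N)) + count_diff j t (Nat.div2 N))%nat.
Proof.
  apply count_below_parity; intro m.
  - now rewrite <- Nat.mul_add_distr_l, s_double, s_double.
  - replace (2 * m + 1 + 2 * t)%nat with (2 * (m + t) + 1)%nat by lia.
    rewrite !s_double_succ.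
    apply Bool.eq_iff_eq_true; rewrite !Z.eqb_eq; lia.
Qed.

Lemma count_diff_0 j N : count_diff j 0 N = if Z.eqb j 0 then N else 0%nat.
Proof.
  rewrite <- count_below_const; unfold count_diff, count_below; f_equal.
  apply filter_ext; intro n.
  rewrite Nat.add_0_r, Z.sub_diag; apply Z.eqb_sym.
Qed.

Lemma count_diff_1_ge2 j N : (2 <= j)%Z -> count_diff j 1 N = 0%nat.
Proof.
  intros Hj; unfold count_diff; induction N as [|N IH]; auto.
  rewrite seq_S, filter_app, length_app, IH; simpl.
  pose proof (s_succ_le N).
  destruct (Z.eqb_spec (Z.of_nat (s (N + 1)) - Z.of_nat (s N)) j); simpl; lia.
Qed.

(** * Densities *)

Definition has_density (c : nat -> nat) (L : R) : Prop :=
  is_lim_seq (fun N => INR (c N) / INR N) L.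

Definition halving (phi : nat -> nat) : Prop :=
  forall N, (N <= 2 * phi N + 1)%nat /\ (2 * phi N <= N + 1)%nat.

Lemma halving_div2 : halving Nat.div2.
Proof. intro N; pose proof (Nat.div2_odd N); destruct (Nat.odd N); simpl in *; lia. Qed.

Lemma halving_div2_succ : halving (fun N => Nat.div2 (S N)).
Proof. intro N; pose proof (Nat.div2_odd (S N)); destruct (Nat.odd (S N)); simpl in *; lia. Qed.

Lemma is_lim_seq_inv_INR : is_lim_seq (fun N => / INR N) 0.
Proof.
  replace (Finite 0) with (Rbar_inv p_infty) by reflexivity.
  apply is_lim_seq_inv; [apply is_lim_seq_INR | discriminate].
Qed.

Lemma halving_ratio phi : halving phi -> is_lim_seq (fun N => INR (phi N) / INR N) (1/2).
Proof.
  intros H.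
  apply is_lim_seq_le_le_loc with (u := fun N => 1/2 - / INR N) (w := fun N => 1/2 + / INR N).
  - exists 1%nat; intros n Hn; destruct (H n) as [H1 H2].
    assert (Hn' : 0 < INR n) by (apply lt_0_INR; lia).
    apply le_INR in H1, H2; rewrite plus_INR, mult_INR in H1, H2; simpl in H1, H2.
    assert (E : INR (phi n) / INR n = 1/2 + (2 * INR (phi n) - INR n) / (2 * INR n))
      by (field; lra).
    assert (E' : / INR n = 2 / (2 * INR n)) by (field; lra).
    rewrite E, E'; unfold Rdiv.
    assert (0 < / (2 * INR n)) by (apply Rinv_0_lt_compat; lra).
    split; apply Rplus_le_compat_l;
      [rewrite Ropp_mult_distr_l | ]; apply Rmult_le_compat_r; lra.
  - replace (1/2) with (1/2 - 0) at 1 by ring.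
    apply is_lim_seq_minus'; [apply is_lim_seq_const | apply is_lim_seq_inv_INR].
  - replace (1/2) with (1/2 + 0) at 1 by ring.
    apply is_lim_seq_plus'; [apply is_lim_seq_const | apply is_lim_seq_inv_INR].
Qed.

Lemma has_density_halving c phi L : halving phi -> has_density c L ->
  has_density (fun N => c (phi N)) (L / 2).
Proof.
  intros H HL; unfold has_density.
  apply is_lim_seq_ext_loc with
    (u := fun N => (INR (c (phi N)) / INR (phi N)) * (INR (phi N) / INR N)).
  - exists 2%nat; intros n Hn; destruct (H n) as [H1 H2].
    assert (0 < INR (phi n)) by (apply lt_0_INR; lia).
    assert (0 < INR n) by (apply lt_0_INR; lia).
    field; lra.
  - replace (L / 2) with (L * (1/2)) by field.
    apply is_lim_seq_mult'; [|now apply halving_ratio].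
    apply (is_lim_seq_subseq (fun N => INR (c N) / INR N)); auto.
    intros P [N0 HN0]; exists (2 * N0 + 2)%nat; intros n Hn; apply HN0.
    specialize (H n); lia.
Qed.

Lemma has_density_halves c a b La Lb :
  (forall N, c N = (a (Nat.div2 (S N)) + b (Nat.div2 N))%nat) ->
  has_density a La -> has_density b Lb -> has_density c ((La + Lb) / 2).
Proof.
  intros Hc Ha Hb; unfold has_density.
  apply is_lim_seq_ext with
    (u := fun N => INR (a (Nat.div2 (S N))) / INR N + INR (b (Nat.div2 N)) / INR N).
  - intro n; rewrite Hc, plus_INR; unfold Rdiv; ring.
  - replace ((La + Lb) / 2) with (La / 2 + Lb / 2) by field.
    apply is_lim_seq_plus'; apply has_density_halving;
      auto using halving_div2, halving_div2_succ.
Qed.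

Lemma delta_has_density j t L : has_density (count_diff j t) L -> delta j t = L.
Proof. intros H; unfold delta; now rewrite (is_lim_seq_unique _ _ H). Qed.

Lemma has_density_0 j : has_density (count_diff j 0) (if Z.eqb j 0 then 1 else 0).
Proof.
  unfold has_density; destruct (Z.eqb j 0) eqn:E.
  - apply is_lim_seq_ext_loc with (u := fun _ => 1); [|apply is_lim_seq_const].
    exists 1%nat; intros n Hn; rewrite count_diff_0, E.
    field; apply not_0_INR; lia.
  - apply is_lim_seq_ext with (u := fun _ => 0); [|apply is_lim_seq_const].
    intro n; rewrite count_diff_0, E; simpl; unfold Rdiv; ring.
Qed.

Lemma has_density_1_ge2 j : (2 <= j)%Z -> has_density (count_diff j 1) 0.
Proof.
  intros Hj; apply is_lim_seq_ext with (u := fun _ => 0); [|apply is_lim_seq_const].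
  intro n; rewrite count_diff_1_ge2 by exact Hj; simpl; unfold Rdiv; ring.
Qed.

(* For [t = 1] the odd recursion refers to [t] itself, so these densities are
   computed by hand: [s(n+1) - s(n) = 1 - k] iff [n] ends in exactly [k] ones. *)
Lemma has_density_1 k : has_density (count_diff (1 - Z.of_nat k) 1) ((1/2) ^ S k).
Proof.
  induction k as [|k IH]; unfold has_density.
  - apply is_lim_seq_ext with (u := fun N => INR (Nat.div2 (S N)) / INR N).
    + intro n; rewrite (count_diff_odd _ 0), count_diff_0, count_diff_1_ge2 by lia.
      simpl; do 3 f_equal; lia.
    + replace ((1/2) ^ 1) with (1/2) by ring; apply halving_ratio, halving_div2_succ.
  - apply is_lim_seq_ext with
      (u := fun N => INR (count_diff (1 - Z.of_nat k) 1 (Nat.div2 N)) / INR N).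
    + intro n; change 1%nat with (2 * 0 + 1)%nat at 2.
      rewrite count_diff_odd, count_diff_0.
      replace (1 - Z.of_nat (S k) - 1 =? 0)%Z with false by (symmetry; apply Z.eqb_neq; lia).
      now replace (1 - Z.of_nat (S k) + 1)%Z with (1 - Z.of_nat k)%Z by lia.
    + replace ((1/2) ^ S (S k)) with ((1/2) ^ S k / 2) by (simpl; field).
      apply (has_density_halving (count_diff (1 - Z.of_nat k) 1)); auto using halving_div2.
Qed.

Lemma count_diff_has_density t j : exists L, has_density (count_diff j t) L.
Proof.
  revert j; induction t as [| |t IH|t IH IH'] using binary_ind; intro j.
  - eexists; apply has_density_0.
  - destruct (Z_le_gt_dec 2 j) as [Hj|Hj].
    + exists 0; now apply has_density_1_ge2.
    + assert (exists k, j = (1 - Z.of_nat k)%Z) as [k ->] by (exists (Z.to_nat (1 - j)); lia).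
      eexists; apply has_density_1.
  - destruct (IH j) as [L HL].
    exists ((L + L) / 2); exact (has_density_halves _ _ _ _ _ (count_diff_even j t) HL HL).
  - destruct (IH (j - 1)%Z) as [L1 HL1], (IH' (j + 1)%Z) as [L2 HL2].
    exists ((L1 + L2) / 2); exact (has_density_halves _ _ _ _ _ (count_diff_odd j t) HL1 HL2).
Qed.

Lemma delta_even j t : delta j (2 * t) = delta j t.
Proof.
  destruct (count_diff_has_density t j) as [L HL].
  rewrite (delta_has_density j t L HL); apply delta_has_density.
  replace L with ((L + L) / 2) by field.
  apply (has_density_halves _ _ _ _ _ (count_diff_even j t) HL HL).
Qed.

Lemma delta_odd j t : delta j (2 * t + 1) = (delta (j - 1) t + delta (j + 1) (t + 1)) / 2.
Proof.
  destruct (count_diff_has_density t (j - 1)%Z) as [L1 HL1].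
  destruct (count_diff_has_density (t + 1) (j + 1)%Z) as [L2 HL2].
  rewrite (delta_has_density _ _ L1 HL1), (delta_has_density _ _ L2 HL2).
  apply delta_has_density, (has_density_halves _ _ _ _ _ (count_diff_odd j t) HL1 HL2).
Qed.

Lemma delta_0 j : delta j 0 = if Z.eqb j 0 then 1 else 0.
Proof. apply delta_has_density, has_density_0. Qed.

Lemma delta_1_ge2 j : (2 <= j)%Z -> delta j 1 = 0.
Proof. intros; now apply delta_has_density, has_density_1_ge2. Qed.

Lemma delta_1 k : delta (1 - Z.of_nat k) 1 = (1/2) ^ S k.
Proof. apply delta_has_density, has_density_1. Qed.

Lemma delta_nonneg j t : 0 <= delta j t.
Proof.
  destruct (count_diff_has_density t j) as [L HL]; rewrite (delta_has_density j t L HL).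
  apply (is_lim_seq_le (fun _ => 0) (fun N => INR (count_diff j t N) / INR N) 0 L);
    [|apply is_lim_seq_const | exact HL].
  intro n; unfold Rdiv; apply Rmult_le_pos; [apply pos_INR|].
  destruct n; [simpl; rewrite Rinv_0; lra|].
  apply Rlt_le, Rinv_0_lt_compat, lt_0_INR; lia.
Qed.

(** * Geometric tails and sums over the integers *)

Lemma pow_le_shift r n m : 0 < r <= 1 -> (n <= m + 1)%nat -> r ^ m <= / r * r ^ n.
Proof.
  intros Hr Hnm.
  assert (H : r ^ (m + 1) <= r ^ n).
  { replace (m + 1)%nat with (n + (m + 1 - n))%nat by lia; rewrite pow_add.
    assert (0 <= r ^ n) by (apply pow_le; lra).
    assert (r ^ (m + 1 - n) <= 1) by (rewrite <- (pow1 (m + 1 - n)); apply pow_incr; lra).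
    nra. }
  rewrite pow_add in H; simpl in H.
  replace (r ^ m) with (/ r * (r ^ m * (r * 1))) by (field; lra).
  apply Rmult_le_compat_l; [left; apply Rinv_0_lt_compat; lra | exact H].
Qed.

Lemma delta_tail_bound t : exists C, 0 <= C /\ forall j, delta j t <= C * (1/2) ^ Z.abs_nat j.
Proof.
  assert (Hpos : forall j, 0 <= (1/2) ^ Z.abs_nat j) by (intro; apply pow_le; lra).
  assert (Hshift : forall j n, (Z.abs_nat j <= n + 1)%nat -> (1/2) ^ n <= 2 * (1/2) ^ Z.abs_nat j).
  { intros j n Hn.
    pose proof (pow_le_shift (1/2) (Z.abs_nat j) n ltac:(lra) Hn) as H.
    now replace (/ (1/2)) with 2 in H by field. }
  induction t as [| |t IH|t [C1 [HC1 H1]] [C2 [HC2 H2]]] using binary_ind.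
  - exists 1; split; [lra|]; intro j; rewrite delta_0.
    specialize (Hpos j); destruct (Z.eqb_spec j 0) as [->|]; simpl; lra.
  - exists 2; split; [lra|]; intro j.
    destruct (Z_le_gt_dec 2 j).
    + rewrite delta_1_ge2 by assumption; specialize (Hpos j); lra.
    + assert (exists k, j = (1 - Z.of_nat k)%Z) as [k ->] by (exists (Z.to_nat (1 - j)); lia).
      rewrite delta_1; apply Hshift; lia.
  - destruct IH as [C [HC H]].
    exists C; split; auto; intro j; rewrite delta_even; apply H.
  - exists (C1 + C2); split; [lra|]; intro j; rewrite delta_odd.
    specialize (H1 (j - 1)%Z); specialize (H2 (j + 1)%Z).
    pose proof (Rmult_le_compat_l C1 _ _ HC1 (Hshift j (Z.abs_nat (j - 1)) ltac:(lia))).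
    pose proof (Rmult_le_compat_l C2 _ _ HC2 (Hshift j (Z.abs_nat (j + 1)) ltac:(lia))).
    lra.
Qed.

Definition zsummable (f : Z -> R) : Prop :=
  ex_series (fun n => f (Z.of_nat n)) /\ ex_series (fun n => f (- Z.of_nat (S n))%Z).

Lemma zsum_ext f g : (forall j, f j = g j) -> zsum f = zsum g.
Proof. intros H; unfold zsum; f_equal; apply Series_ext; auto. Qed.

Lemma zsum_plus f g : zsummable f -> zsummable g -> zsum (fun j => f j + g j) = zsum f + zsum g.
Proof. intros [Hf1 Hf2] [Hg1 Hg2]; unfold zsum; rewrite !Series_plus; auto; ring. Qed.

Lemma zsum_scal c f : zsum (fun j => c * f j) = c * zsum f.
Proof. unfold zsum; rewrite !Series_scal_l; ring. Qed.

Lemma zsum_shift_pred f : zsummable f -> zsum (fun j => f (j - 1)%Z) = zsum f.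
Proof.
  intros [H1 H2]; unfold zsum.
  rewrite (Series_incr_1 (fun n => f (Z.of_nat n - 1)%Z)).
  - rewrite (Series_incr_1 (fun n => f (- Z.of_nat (S n))%Z)) by exact H2.
    rewrite (Series_ext (fun k => f (Z.of_nat (S k) - 1)%Z) (fun n => f (Z.of_nat n)))
      by (intro; f_equal; lia).
    rewrite (Series_ext (fun k => f (- Z.of_nat (S (S k)))%Z) (fun n => f (- Z.of_nat (S n) - 1)%Z))
      by (intro; f_equal; lia).
    simpl; ring.
  - apply ex_series_incr_1, (ex_series_ext (fun n => f (Z.of_nat n))); auto.
    intro; f_equal; lia.
Qed.

Lemma zsum_shift_succ f : zsummable f -> zsum (fun j => f (j + 1)%Z) = zsum f.
Proof.
  intros [H1 H2]; unfold zsum.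
  rewrite (Series_incr_1 (fun n => f (Z.of_nat n))) by exact H1.
  rewrite (Series_incr_1 (fun n => f (- Z.of_nat (S n) + 1)%Z)).
  - rewrite (Series_ext (fun k => f (Z.of_nat (S k))) (fun n => f (Z.of_nat n + 1)%Z))
      by (intro; f_equal; lia).
    rewrite (Series_ext (fun k => f (- Z.of_nat (S (S k)) + 1)%Z) (fun n => f (- Z.of_nat (S n))%Z))
      by (intro; f_equal; lia).
    simpl; ring.
  - apply ex_series_incr_1, (ex_series_ext (fun n => f (- Z.of_nat (S n))%Z)); auto.
    intro; f_equal; lia.
Qed.

Section GeometricTails.

Variable r : R.
Hypothesis r_pos : 0 < r.
Hypothesis r_lt_1 : r < 1.

Definition geom_bounded (f : Z -> R) : Prop :=
  exists C, 0 <= C /\ forall j, Rabs (f j) <= C * r ^ Z.abs_nat j.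

Lemma ex_series_geom C : ex_series (fun n => C * r ^ n).
Proof.
  apply (ex_series_ext (fun n => scal C (r ^ n))); [reflexivity|].
  apply (@ex_series_scal_l R_AbsRing R_NormedModule C (fun n => r ^ n)).
  eexists; apply is_series_geom; rewrite Rabs_pos_eq; lra.
Qed.

Lemma geom_bounded_zsummable f : geom_bounded f -> zsummable f.
Proof.
  intros [C [HC H]]; split.
  - apply (@ex_series_le R_AbsRing R_CompleteNormedModule _ (fun n => C * r ^ n));
      [|apply ex_series_geom].
    intro n; change (norm (f (Z.of_nat n))) with (Rabs (f (Z.of_nat n))).
    rewrite <- (Zabs2Nat.id n) at 2; apply H.
  - apply (@ex_series_le R_AbsRing R_CompleteNormedModule _ (fun n => (C * r) * r ^ n));
      [|apply ex_series_geom].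
    intro n; change (norm (f (- Z.of_nat (S n))%Z)) with (Rabs (f (- Z.of_nat (S n))%Z)).
    replace ((C * r) * r ^ n) with (C * r ^ Z.abs_nat (- Z.of_nat (S n))); [apply H|].
    replace (Z.abs_nat (- Z.of_nat (S n))) with (S n) by lia; simpl; ring.
Qed.

Lemma geom_bounded_shift f d : geom_bounded f -> (d = 1 \/ d = -1)%Z ->
  geom_bounded (fun j => f (j + d)%Z).
Proof.
  intros [C [HC H]] Hd; exists (C * / r); split.
  - apply Rmult_le_pos; [exact HC | left; now apply Rinv_0_lt_compat].
  - intro j; eapply Rle_trans; [apply H|].
    rewrite Rmult_assoc; apply Rmult_le_compat_l; [exact HC|].
    apply pow_le_shift; lra || lia.
Qed.

Lemma geom_bounded_scal c f : geom_bounded f -> geom_bounded (fun j => c * f j).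
Proof.
  intros [C [HC H]]; exists (Rabs c * C); split.
  - apply Rmult_le_pos; [apply Rabs_pos | exact HC].
  - intro j; rewrite Rabs_mult, Rmult_assoc; apply Rmult_le_compat_l; [apply Rabs_pos | apply H].
Qed.

End GeometricTails.

(** * The moment generating function *)

(* Any radius below [ln 2] would do, as [delta j t = O(2^-|j|)]. *)
Definition Ihalf (x : R) : Prop := -1/2 < x < 1/2.

Lemma open_Ihalf : open Ihalf.
Proof. apply open_and; [apply open_gt | apply open_lt]. Qed.

Lemma Ihalf_0 : Ihalf 0.
Proof. unfold Ihalf; lra. Qed.

Lemma exp_half_lt_2 : exp (1/2) < 2.
Proof.
  assert (E : exp (1/2) * exp (1/2) = exp 1) by (rewrite <- exp_plus; f_equal; field).
  pose proof exp_le_3; pose proof (exp_pos (1/2)); nra.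
Qed.

Lemma exp_opp_lt_2 x : Ihalf x -> exp (- x) < 2.
Proof.
  intros [H1 H2]; pose proof exp_half_lt_2.
  assert (exp (- x) < exp (1/2)) by (apply exp_increasing; lra); lra.
Qed.

Definition mgf_term (t : nat) (x : R) (j : Z) : R := delta j t * exp (IZR j * x).

(* [delta j t = O(2^-|j|)] and [|j x| <= |j| / 2]. *)
Lemma mgf_term_geom_bounded t x : Ihalf x -> geom_bounded (exp (1/2) / 2) (mgf_term t x).
Proof.
  intros [Hx1 Hx2]; destruct (delta_tail_bound t) as [C [HC H]].
  exists C; split; [exact HC|]; intro j; unfold mgf_term.
  pose proof (delta_nonneg j t); pose proof (exp_pos (IZR j * x)).
  rewrite Rabs_pos_eq by (apply Rmult_le_pos; lra).
  assert (Hj : exp (IZR j * x) <= exp (1/2) ^ Z.abs_nat j).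
  { rewrite <- Rpower_pow by apply exp_pos; unfold Rpower; rewrite ln_exp.
    assert (Hle : IZR j * x <= INR (Z.abs_nat j) * (1/2)).
    { rewrite INR_IZR_INZ, Zabs2Nat.id_abs, <- Rabs_Zabs.
      pose proof (Rle_abs (IZR j * x)); rewrite Rabs_mult in *.
      assert (Rabs x <= 1/2) by (apply Rabs_le; lra).
      pose proof (Rabs_pos (IZR j)); nra. }
    destruct (Rle_lt_or_eq_dec _ _ Hle) as [Hlt | ->]; [left; now apply exp_increasing | lra]. }
  replace (exp (1/2) / 2) with (exp (1/2) * (1/2)) by field; rewrite Rpow_mult_distr.
  specialize (H j).
  apply Rle_trans with (C * (1/2) ^ Z.abs_nat j * exp (IZR j * x)).
  - apply Rmult_le_compat_r; lra.
  - rewrite (Rmult_comm (exp (1/2) ^ _)), <- Rmult_assoc.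
    apply Rmult_le_compat_l; [|exact Hj].
    apply Rmult_le_pos; [exact HC | apply pow_le; lra].
Qed.

Lemma mgf_term_zsummable t x : Ihalf x -> zsummable (mgf_term t x).
Proof.
  intros Hx; apply (geom_bounded_zsummable (exp (1/2) / 2)).
  - pose proof (exp_pos (1/2)); lra.
  - pose proof exp_half_lt_2; lra.
  - now apply mgf_term_geom_bounded.
Qed.

Lemma mgf_zsum t x : mgf t x = zsum (mgf_term t x).
Proof. reflexivity. Qed.

Lemma mgf_even t x : mgf (2 * t) x = mgf t x.
Proof. apply zsum_ext; intro j; now rewrite delta_even. Qed.

Lemma mgf_odd t x : Ihalf x ->
  2 * mgf (2 * t + 1) x = exp x * mgf t x + exp (- x) * mgf (t + 1) x.
Proof.
  intros Hx; rewrite !mgf_zsum.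
  assert (Hsum : forall u d c, (d = 1 \/ d = -1)%Z ->
             zsummable (fun j => c * mgf_term u x (j + d)%Z)).
  { intros u d c Hd; pose proof (exp_pos (1/2)); pose proof exp_half_lt_2.
    apply (geom_bounded_zsummable (exp (1/2) / 2)); try lra.
    apply geom_bounded_scal, geom_bounded_shift; try lra; auto.
    now apply mgf_term_geom_bounded. }
  rewrite (zsum_ext _ (fun j => exp x / 2 * mgf_term t x (j + -1)%Z
                              + exp (- x) / 2 * mgf_term (t + 1) x (j + 1)%Z)).
  - rewrite zsum_plus, !zsum_scal by (apply Hsum; auto).
    rewrite (zsum_ext _ (fun j => mgf_term t x (j - 1)%Z)) by (intro; f_equal; lia).
    rewrite zsum_shift_pred, zsum_shift_succ by (now apply mgf_term_zsummable).
    field.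
  - intro j; unfold mgf_term; rewrite delta_odd.
    replace (j + -1)%Z with (j - 1)%Z by lia.
    replace (IZR (j - 1) * x) with (IZR j * x + - x) by (rewrite minus_IZR; ring).
    replace (IZR (j + 1) * x) with (IZR j * x + x) by (rewrite plus_IZR; ring).
    rewrite !exp_plus, exp_Ropp; field; apply Rgt_not_eq, exp_pos.
Qed.

Lemma Series_zero (a : nat -> R) : (forall n, a n = 0) -> Series a = 0.
Proof.
  intros H; rewrite (Series_ext a (fun _ => 0 * 0)) by (intro; rewrite H; ring).
  rewrite Series_scal_l; ring.
Qed.

Lemma mgf_0 x : Ihalf x -> mgf 0 x = 1.
Proof.
  intros Hx; destruct (mgf_term_zsummable 0 x Hx) as [H1 _]; rewrite mgf_zsum; unfold zsum.
  rewrite Series_incr_1 by exact H1.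
  unfold mgf_term; rewrite !Series_zero.
  - rewrite delta_0; simpl; rewrite Rmult_0_l, exp_0; ring.
  - intro n; rewrite delta_0, (proj2 (Z.eqb_neq _ 0)) by lia; ring.
  - intro n; rewrite delta_0, (proj2 (Z.eqb_neq _ 0)) by lia; ring.
Qed.

Lemma mgf_1 x : Ihalf x -> mgf 1 x = exp x / (2 - exp (- x)).
Proof.
  intros Hx; pose proof (mgf_odd 0 x Hx) as H; simpl in H.
  rewrite mgf_0 in H by exact Hx; pose proof (exp_opp_lt_2 x Hx).
  assert (E : exp x = mgf 1 x * (2 - exp (- x))) by lra.
  rewrite E; field; lra.
Qed.

Lemma mgf_at_origin t : mgf t 0 = 1.
Proof.
  induction t as [| |t IH|t IH IH'] using binary_ind.
  - exact (mgf_0 0 Ihalf_0).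
  - rewrite mgf_1 by exact Ihalf_0; rewrite Ropp_0, exp_0; field.
  - now rewrite mgf_even.
  - pose proof (mgf_odd t 0 Ihalf_0) as H; rewrite IH, IH', Ropp_0, exp_0 in H; lra.
Qed.

Lemma mgf_pos t x : Ihalf x -> 0 < mgf t x.
Proof.
  intros Hx; pose proof (exp_pos x); pose proof (exp_pos (- x)).
  induction t as [| |t IH|t IH IH'] using binary_ind.
  - rewrite mgf_0 by exact Hx; lra.
  - rewrite mgf_1 by exact Hx; pose proof (exp_opp_lt_2 x Hx).
    apply Rdiv_lt_0_compat; lra.
  - now rewrite mgf_even.
  - pose proof (mgf_odd t x Hx); pose proof (Rmult_lt_0_compat _ _ H IH).
    pose proof (Rmult_lt_0_compat _ _ H0 IH'); lra.
Qed.

Lemma mgf_smooth t : smooth_on Ihalf (mgf t).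
Proof.
  pose proof open_Ihalf as HO.
  assert (Hexp : forall a, smooth_on Ihalf (fun y => exp (a * y)))
    by (intro; now apply smooth_on_exp_scal).
  induction t as [| |t IH|t IH IH'] using binary_ind.
  - apply (smooth_on_ext _ HO (fun _ => 1)); [intros; symmetry; now apply mgf_0|].
    now apply smooth_on_const.
  - apply (smooth_on_ext _ HO (fun y => exp (1 * y) * / (2 + -1 * exp (-1 * y)))).
    { intros y Hy; rewrite mgf_1 by exact Hy.
      replace (-1 * y) with (- y) by ring; rewrite Rmult_1_l; unfold Rdiv; do 2 f_equal; ring. }
    apply smooth_on_mult; auto.
    apply (smooth_on_comp (fun y => 0 < y) Ihalf Rinv); auto using open_gt, smooth_on_inv.
    + intros y Hy; pose proof (exp_opp_lt_2 y Hy); replace (-1 * y) with (- y) by ring; lra.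
    + apply smooth_on_plus, smooth_on_mult; auto using smooth_on_const.
  - apply (smooth_on_ext _ HO (mgf t)); auto; intros; now rewrite mgf_even.
  - apply (smooth_on_ext _ HO (fun y => / 2 * (exp (1 * y) * mgf t y)
                                      + / 2 * (exp (-1 * y) * mgf (t + 1) y))).
    { intros y Hy; apply (Rmult_eq_reg_l 2); [|lra].
      rewrite mgf_odd by exact Hy.
      replace (-1 * y) with (- y) by ring; rewrite Rmult_1_l; field. }
    pose proof (smooth_on_const Ihalf (/ 2) HO).
    apply (smooth_on_plus _ HO); apply (smooth_on_mult _ HO); auto;
      apply (smooth_on_mult _ HO); auto.
Qed.

(** * Cumulants *)

Definition cgf (t : nat) (x : R) : R := ln (mgf t x).

Lemma kappa_cgf k t : kappa k t = Derive_n (cgf t) k 0.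
Proof. reflexivity. Qed.

Lemma cgf_smooth t : smooth_on Ihalf (cgf t).
Proof.
  apply (smooth_on_comp (fun y => 0 < y) Ihalf ln (mgf t));
    auto using open_gt, open_Ihalf, smooth_on_ln, mgf_pos, mgf_smooth.
Qed.

Lemma cgf_at_origin t : cgf t 0 = 0.
Proof. unfold cgf; now rewrite mgf_at_origin, ln_1. Qed.

Lemma Derive_n_shifted_cgf a t i :
  Derive_n (fun y => a * y + cgf t y) i 0 = (if (i =? 1)%nat then a else 0) + kappa i t.
Proof.
  rewrite (Derive_n_plus_smooth_on Ihalf open_Ihalf), Derive_n_scal_id_0;
    auto using smooth_on_scal_id, open_Ihalf, cgf_smooth, Ihalf_0.
Qed.

Lemma exp_cgf_odd t y : Ihalf y ->
  2 * exp (cgf (2 * t + 1) y) = exp (1 * y + cgf t y) + exp (-1 * y + cgf (t + 1) y).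
Proof.
  intros Hy; unfold cgf; rewrite !exp_plus, !exp_ln by (now apply mgf_pos).
  rewrite mgf_odd by exact Hy; replace (-1 * y) with (- y) by ring; now rewrite Rmult_1_l.
Qed.

(* Differentiating [exp_cgf_odd] [k] times at 0. *)
Lemma kappa_odd_bell t k : (k <= 5)%nat ->
  2 * bell k (fun i => kappa i (2 * t + 1)) =
  bell k (fun i => (if (i =? 1)%nat then 1 else 0) + kappa i t) +
  bell k (fun i => (if (i =? 1)%nat then -1 else 0) + kappa i (t + 1)).
Proof.
  intros Hk; pose proof open_Ihalf as HO.
  assert (Hshifted : forall a u, smooth_on Ihalf (fun y => a * y + cgf u y))
    by (intros; apply smooth_on_plus; auto using smooth_on_scal_id, cgf_smooth).
  assert (Hbell : forall a u, Derive_n (fun y => exp (a * y + cgf u y)) k 0 =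
            bell k (fun i => (if (i =? 1)%nat then a else 0) + kappa i u)).
  { intros a u; rewrite (Derive_n_exp_comp_bell Ihalf (fun y => a * y + cgf u y));
      auto using Ihalf_0.
    - unfold bell; destruct k as [|[|[|[|[|[|k]]]]]]; rewrite ?Derive_n_shifted_cgf; reflexivity.
    - now rewrite cgf_at_origin, Rmult_0_r, Rplus_0_l. }
  rewrite <- (Hbell 1), <- (Hbell (-1)).
  change (fun i => kappa i (2 * t + 1)) with (fun i => Derive_n (cgf (2 * t + 1)) i 0).
  rewrite <- (Derive_n_exp_comp_bell Ihalf (cgf (2 * t + 1)))
    by auto using cgf_smooth, Ihalf_0, cgf_at_origin.
  rewrite <- Derive_n_scal_l.
  rewrite (Derive_n_ext_on Ihalf HO _ _ (exp_cgf_odd t)) by exact Ihalf_0.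
  apply (Derive_n_plus_smooth_on Ihalf HO); auto using smooth_on_exp_comp, Ihalf_0.
Qed.

Lemma kappa_even k t : kappa k (2 * t) = kappa k t.
Proof. apply Derive_n_ext; intro x; now rewrite mgf_even. Qed.

Lemma kappa_0 k : kappa k 0 = 0.
Proof.
  rewrite kappa_cgf, (Derive_n_ext_on Ihalf open_Ihalf (cgf 0) (fun _ => 0)).
  - destruct k; [reflexivity | apply Derive_n_const].
  - intros y Hy; unfold cgf; now rewrite mgf_0, ln_1.
  - exact Ihalf_0.
Qed.

Lemma kappa_1 t : kappa 1 t = 0.
Proof.
  induction t as [| |t IH|t IH IH'] using binary_ind.
  - apply kappa_0.
  - pose proof (kappa_odd_bell 0 1 ltac:(lia)) as H; cbn [bell Nat.eqb] in H.
    rewrite kappa_0 in H; simpl Nat.add in H; lra.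
  - now rewrite kappa_even.
  - pose proof (kappa_odd_bell t 1 ltac:(lia)) as H; cbn [bell Nat.eqb] in H.
    rewrite IH, IH' in H; lra.
Qed.

Lemma kappa_odd t :
  kappa 2 (2 * t + 1) = (kappa 2 t + kappa 2 (t + 1)) / 2 + 1 /\
  kappa 3 (2 * t + 1) = (kappa 3 t + kappa 3 (t + 1)) / 2
                        + 3 / 2 * (kappa 2 t - kappa 2 (t + 1)) /\
  kappa 4 (2 * t + 1) = (kappa 4 t + kappa 4 (t + 1)) / 2
                        + 2 * (kappa 3 t - kappa 3 (t + 1))
                        + 3 / 4 * (kappa 2 t - kappa 2 (t + 1)) ^ 2 - 2 /\
  kappa 5 (2 * t + 1) = (kappa 5 t + kappa 5 (t + 1)) / 2
                        + 5 / 2 * (kappa 4 t - kappa 4 (t + 1))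
                        + 5 / 2 * (kappa 2 t - kappa 2 (t + 1)) * (kappa 3 t - kappa 3 (t + 1))
                        - 10 * (kappa 2 t - kappa 2 (t + 1)).
Proof.
  pose proof (kappa_odd_bell t 2 ltac:(lia)) as B2.
  pose proof (kappa_odd_bell t 3 ltac:(lia)) as B3.
  pose proof (kappa_odd_bell t 4 ltac:(lia)) as B4.
  pose proof (kappa_odd_bell t 5 ltac:(lia)) as B5.
  cbn [bell Nat.eqb] in B2, B3, B4, B5; rewrite !kappa_1 in B2, B3, B4, B5.
  assert (K2 : kappa 2 (2 * t + 1) = (kappa 2 t + kappa 2 (t + 1)) / 2 + 1) by lra.
  rewrite K2 in B3, B4, B5.
  assert (K3 : kappa 3 (2 * t + 1) = (kappa 3 t + kappa 3 (t + 1)) / 2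
                                     + 3 / 2 * (kappa 2 t - kappa 2 (t + 1))) by lra.
  rewrite K3 in B4, B5.
  assert (K4 : kappa 4 (2 * t + 1) = (kappa 4 t + kappa 4 (t + 1)) / 2
                                     + 2 * (kappa 3 t - kappa 3 (t + 1))
                                     + 3 / 4 * (kappa 2 t - kappa 2 (t + 1)) ^ 2 - 2) by lra.
  rewrite K4 in B5.
  repeat split; auto; lra.
Qed.

Theorem lemma2p1 :
  (forall t : nat,
    kappa 2 (2 * t + 1) = (kappa 2 t + kappa 2 (t + 1)) / 2 + 1 /\
    kappa 3 (2 * t + 1) = (kappa 3 t + kappa 3 (t + 1)) / 2
                          + 3 / 2 * (kappa 2 t - kappa 2 (t + 1)) /\
    kappa 4 (2 * t + 1) = (kappa 4 t + kappa 4 (t + 1)) / 2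
                          + 2 * (kappa 3 t - kappa 3 (t + 1))
                          + 3 / 4 * (kappa 2 t - kappa 2 (t + 1)) ^ 2 - 2 /\
    kappa 5 (2 * t + 1) = (kappa 5 t + kappa 5 (t + 1)) / 2
                          + 5 / 2 * (kappa 4 t - kappa 4 (t + 1))
                          + 5 / 2 * (kappa 2 t - kappa 2 (t + 1))
                                  * (kappa 3 t - kappa 3 (t + 1))
                          - 10 * (kappa 2 t - kappa 2 (t + 1))) /\
  kappa 2 1 = 2 /\ kappa 3 1 = -6 /\ kappa 4 1 = 26 /\ kappa 5 1 = -150.
Proof.
  split; [exact kappa_odd|].
  destruct (kappa_odd 0) as [K2 [K3 [K4 K5]]].
  change (2 * 0 + 1)%nat with 1%nat in K2, K3, K4, K5.
  change (0 + 1)%nat with 1%nat in K2, K3, K4, K5.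
  repeat rewrite kappa_0 in *.
  assert (E2 : kappa 2 1 = 2) by lra; rewrite E2 in K3, K4, K5.
  assert (E3 : kappa 3 1 = -6) by lra; rewrite E3 in K4, K5.
  assert (E4 : kappa 4 1 = 26) by lra; rewrite E4 in K5.
  repeat split; auto; lra.
Qed.
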